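(* Let $G$ be a finite group and let $\mathcal{C}$ be a cycle of $\mathcal{P}(G)$. Then there exists a cycle $\mathcal{C}'$ of $\mathcal{P}(G)$ whose vertex set contains that of $\mathcal{C}$ and such that $[x]_{\mathtt{N}}\subseteq V_{\mathcal{C}'}$ for every $x\in V_{\mathcal{C}'}$.
   Context: The power graph $\mathcal{P}(G)$ has vertex set $G$, and distinct $x,y$ are adjacent iff one is a positive integer power of the other. $N[x]$ is the closed neighbourhood of $x$ in $\mathcal{P}(G)$; $x\mathtt{N}y$ iff $N[x]=N[y]$, with class $[x]_{\mathtt{N}}$. A cycle is a subgraph whose $k\ge3$ distinct vertices can be arranged cyclically with consecutive vertices adjacent; $V_{\mathcal{C}}$ is its vertex set. *)

From mathcomp Require Import all_boot all_fingroup.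
Set Implicit Arguments. Unset Strict Implicit. Unset Printing Implicit Defensive.
Local Open Scope group_scope.

Definition is_pos_power (gT : finGroupType) (x y : gT) : Prop :=
  exists n : nat, (0 < n)%N /\ y = x ^+ n.

Definition pg_adj (gT : finGroupType) (x y : gT) : Prop :=
  x <> y /\ (is_pos_power x y \/ is_pos_power y x).

Definition closed_nbhd (gT : finGroupType) (x : gT) : gT -> Prop :=
  fun z => z = x \/ pg_adj x z.

(* x N y  iff  N[x] = N[y] ; the class [x]_N is {y | x N y} *)
Definition N_rel (gT : finGroupType) (x y : gT) : Prop :=
  forall z, closed_nbhd x z <-> closed_nbhd y z.

(* a cycle of P(G), given by the cyclic sequence of its (distinct) vertices;
   its vertex set is the set of entries of the sequence *)
Definition pg_cycle (gT : finGroupType) (s : seq gT) : Prop :=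
  uniq s /\ (3 <= size s)%N /\
  forall i, (i < size s)%N ->
    pg_adj (nth 1 s i) (nth 1 s (i.+1 %% size s)).

From mathcomp Require Import all_boot all_fingroup.
From Stdlib Require Import Classical.
From mathcomp Require Import zify.

Set Implicit Arguments.
Unset Strict Implicit.
Unset Printing Implicit Defensive.

(* If [x] lies on a cycle and [y] is an N-twin of [x] off the cycle, then [y]
   may be inserted just before [x]: [y] is adjacent to [x], and the predecessor
   of [x] lies in N[x] = N[y], hence is adjacent to [y].  Each insertion makes
   the cycle longer, and a cycle has at most |G| vertices, so repeating this
   while some N-class meets the cycle without being contained in it ends with
   a cycle that is a union of N-classes. *)

Section CycleNth.
Variables (T : Type) (e : rel T) (x0 : T).

Lemma cycle_nthP s :
  reflect (forall i, i < size s -> e (nth x0 s i) (nth x0 s (i.+1 %% size s)))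
          (path.cycle e s).
Proof.
case: s => [|x p]; first by left.
have nth_head i : i < (size p).+1 -> nth x0 (x :: rcons p x) i = nth x0 (x :: p) i.
  by move=> lti; rewrite -rcons_cons nth_rcons [size _]/= lti.
have nth_next i : i < (size p).+1 ->
    nth x0 (rcons p x) i = nth x0 (x :: p) (i.+1 %% (size p).+1).
  move=> lti; rewrite nth_rcons.
  case: (ltngtP i (size p)) lti => [lt_ip _ | lt_pi | -> _].
  - by rewrite modn_small.
  - by rewrite ltnS leqNgt lt_pi.
  - by rewrite modnn.
rewrite /=; apply: (iffP (pathP x0)) => e_p i; rewrite ?size_rcons => lti.
  by rewrite -nth_head // -nth_next //; apply: e_p; rewrite size_rcons.
by rewrite nth_head // nth_next //; apply: e_p.
Qed.

End CycleNth.

Local Open Scope group_scope.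

Section PowerGraph.
Variable gT : finGroupType.
Implicit Types (x y z : gT) (s : seq gT).

Lemma is_pos_powerP x y : reflect (is_pos_power x y) (y \in <[x]>).
Proof.
apply: (iffP idP) => [/cycleP[i ->] | [n [_ ->]]]; last exact: mem_cycle.
exists (i + #[x])%N; split; first by rewrite addn_gt0 order_gt0 orbT.
by rewrite expgD expg_order mulg1.
Qed.

Definition pg_adjb x y := (x != y) && ((y \in <[x]>) || (x \in <[y]>)).

Lemma pg_adjP x y : reflect (pg_adj x y) (pg_adjb x y).
Proof.
apply: (iffP andP) => [[/eqP neq_xy /orP[] /is_pos_powerP] | [neq_xy pow_xy]].
- by split; [exact: neq_xy | left].
- by split; [exact: neq_xy | right].
split; first exact/eqP.
by apply/orP; case: pow_xy => /is_pos_powerP; [left | right].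
Qed.

Lemma pg_cycleE s :
  pg_cycle s <-> [/\ uniq s, 2 < size s & path.cycle pg_adjb s].
Proof.
split=> [[uniq_s [size_s adj_s]] | [uniq_s size_s /(cycle_nthP _ 1) adj_s]].
  by split=> //; apply/(cycle_nthP _ 1) => i lti; apply/pg_adjP/adj_s.
by split; [|split] => // i lti; apply/pg_adjP/adj_s.
Qed.

Lemma pg_cycle_rot n s : pg_cycle s -> pg_cycle (rot n s).
Proof. by rewrite !pg_cycleE rot_uniq size_rot rot_cycle. Qed.

Lemma pg_cycle_size s : pg_cycle s -> size s <= #|gT|.
Proof. by case=> /card_uniqP <- _; apply: max_card. Qed.

Lemma N_rel_adj x y z : N_rel x y -> z <> y -> closed_nbhd x z -> pg_adj y z.
Proof. by move=> xNy neq_zy /xNy[]. Qed.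

Lemma pg_adj_sym x y : pg_adj x y -> pg_adj y x.
Proof. by case=> neq_xy pow_xy; split; [exact: nesym | case: pow_xy; [right | left]]. Qed.

Lemma pg_cycle_insert_twin x y s :
  pg_cycle (x :: s) -> N_rel x y -> y \notin x :: s -> pg_cycle (y :: x :: s).
Proof.
rewrite !pg_cycleE => -[uniq_xs size_xs] /=; rewrite rcons_path => /andP[path_xs adj_last].
move=> xNy y_xs; have neq_xy : x <> y by move=> eq_xy; rewrite eq_xy mem_head in y_xs.
have adj_yx : pg_adjb y x by apply/pg_adjP/(N_rel_adj xNy neq_xy); left.
have adj_last_y : pg_adjb (last x s) y.
  apply/pg_adjP/pg_adj_sym/(N_rel_adj xNy) => [eq_ly|].
    by rewrite -eq_ly mem_last in y_xs.
  by right; apply/pg_adj_sym/pg_adjP.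
split; [by rewrite /= y_xs | by rewrite /= ltnS ltnW | ].
by rewrite /= adj_yx rcons_path path_xs.
Qed.

Lemma pg_cycle_extend C x y :
  pg_cycle C -> x \in C -> y \notin C -> N_rel x y ->
  exists2 C', pg_cycle C' & size C' = (size C).+1 /\ {subset C <= C'}.
Proof.
move=> cycC xC yC xNy; have [i s rotC] := rot_to xC.
have memC : C =i x :: s by move=> z; rewrite -rotC mem_rot.
exists (y :: x :: s).
  by apply: pg_cycle_insert_twin => //; [rewrite -rotC; exact: pg_cycle_rot | rewrite -memC].
by split=> [|z zC]; [rewrite -(size_rot i C) rotC | rewrite inE -memC zC orbT].
Qed.

End PowerGraph.

Theorem mainTheorem6 (gT : finGroupType) (C : seq gT) :
  pg_cycle C ->
  exists C' : seq gT,
    pg_cycle C' /\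
    {subset C <= C'} /\
    (forall x, x \in C' -> forall y, N_rel x y -> y \in C').
Proof.
have [n] := ubnP (#|gT| - size C); elim: n C => // n IHn C ltCn cycC.
have [[x [y [xC yC xNy]]] | closedC] :=
  classic (exists x y, [/\ x \in C, y \notin C & N_rel x y]).
  have [C1 cycC1 [sizeC1 subC1]] := pg_cycle_extend cycC xC yC xNy.
  have /pg_cycle_size leC1 := cycC1.
  have ltC1n : #|gT| - size C1 < n by lia.
  have [C' [cycC' [subC' closedC']]] := IHn C1 ltC1n cycC1.
  by exists C'; split=> //; split=> // z /subC1 /subC'.
exists C; split=> //; split=> // x xC y xNy.
by apply/negPn/negP => yC; apply: closedC; exists x, y.
Qed.
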